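(* Let $(K,\le)$ be a linearly ordered set which is compact in its order topology, and let $d:K\times K\to[0,+\infty)$ be a symmetric map with $d(x,y)>0$ whenever $x\neq y$, such that for every $x<y$ in $K$ with $]x,y[\neq\emptyset$ and every $\varepsilon>0$ there exist $u<v$ with $]u,v[$ a nonempty open interval contained in $]x,y[$ and $\sup\{d(s,t): s,t\in\,]u,v[\}<\varepsilon$. Then $K$ is almost totally disconnected.
   Context: Here $]x,y[=\{z\in K: x<z<y\}$. For a set $\Gamma$, $\Sigma_0^1[0,1]^\Gamma$ is the subspace of $[0,1]^\Gamma$ (product topology) consisting of those $x$ with $x_\gamma\in\{0,1\}$ for all but countably many $\gamma$. A compact space is almost totally disconnected if it is homeomorphic to a subspace of $\Sigma_0^1[0,1]^\Gamma$ for some set $\Gamma$. *)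

From Stdlib Require Import Reals List.
Open Scope R_scope.

Definition linear_order {K : Type} (le : K -> K -> Prop) : Prop :=
  (forall x, le x x) /\
  (forall x y, le x y -> le y x -> x = y) /\
  (forall x y z, le x y -> le y z -> le x z) /\
  (forall x y, le x y \/ le y x).

Definition lt_of {K : Type} (le : K -> K -> Prop) (x y : K) : Prop :=
  le x y /\ x <> y.

Definition oint {K : Type} (le : K -> K -> Prop) (x y : K) : K -> Prop :=
  fun z => lt_of le x z /\ lt_of le z y.

(* finite intersections of subbasic open rays {z | a < z}, {z | z < b}
   (None = no constraint) *)
Definition ray_box {K : Type} (le : K -> K -> Prop) (oa ob : option K) : K -> Prop :=
  fun z => (match oa with Some a => lt_of le a z | None => True end) /\
           (match ob with Some b => lt_of le z b | None => True end).

Definition order_open {K : Type} (le : K -> K -> Prop) (U : K -> Prop) : Prop :=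
  forall x, U x -> exists oa ob, ray_box le oa ob x /\
                    (forall z, ray_box le oa ob z -> U z).

Definition compact_space {X : Type} (is_open : (X -> Prop) -> Prop) : Prop :=
  forall (I : Type) (U : I -> X -> Prop),
    (forall i, is_open (U i)) -> (forall x, exists i, U i x) ->
    exists l : list I, forall x, exists i, In i l /\ U i x.

Definition prod_open {G : Type} (W : (G -> R) -> Prop) : Prop :=
  forall p, W p -> exists (l : list G) (eps : R), 0 < eps /\
    (forall q, (forall g, In g l -> Rabs (q g - p g) < eps) -> W q).

Definition continuous_between {X Y : Type} (openX : (X -> Prop) -> Prop)
  (openY : (Y -> Prop) -> Prop) (f : X -> Y) : Prop :=
  forall V, openY V -> openX (fun x => V (f x)).

Definition embedding {X Y : Type} (openX : (X -> Prop) -> Prop)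
  (openY : (Y -> Prop) -> Prop) (f : X -> Y) : Prop :=
  (forall x y, f x = f y -> x = y) /\
  continuous_between openX openY f /\
  (forall U, openX U -> exists V, openY V /\
     (forall x, U x <-> V (f x))).

Definition countable_set {G : Type} (A : G -> Prop) : Prop :=
  exists h : G -> nat, forall g g', A g -> A g' -> h g = h g' -> g = g'.

Definition in_Sigma01 {G : Type} (p : G -> R) : Prop :=
  (forall g, 0 <= p g <= 1) /\
  countable_set (fun g => p g <> 0 /\ p g <> 1).

Definition almost_totally_disconnected {X : Type} (openX : (X -> Prop) -> Prop) : Prop :=
  exists (G : Type) (f : X -> (G -> R)),
    (forall x, in_Sigma01 (f x)) /\ embedding openX (@prod_open G) f.

(* K is embedded into Sigma_0^1[0,1]^G, G = (K * K) + (nat * (K * K)), by nondecreasing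
   continuous coordinates K -> [0,1]:
   - for each gap c < e (]c,e[ empty), the indicator of the clopen set ]c,+oo[ = [e,+oo[;
   - for each n and each interval ]u,v[ of a maximal disjoint family of nonempty intervals of
     d-diameter < 1/(n+1), if K has no gap in [u,v], an Urysohn function of [u,v] obtained by
     bisection along dyadic numbers: 0 on ]-oo,u] and 1 on [v,+oo[.
   Monotone continuous coordinates separating points give a topological embedding
   (embedding_criterion).  At a point x only the Urysohn coordinates of family intervals
   containing x are outside {0,1}, at most one per n by disjointness, hence countably many.
   Points a < b are separated by a jump coordinate if [a,b] contains a gap; otherwise the
   compactness of K (nested intervals) and d(x,y) > 0 for x <> y force some family interval
   to lie inside [a,b] (interval_in_family), whose Urysohn coordinate separates a from b. *)
From Stdlib Require Import Reals Lra Lia List Arith Wf_nat.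
From Stdlib Require Import Classical ClassicalEpsilon ClassicalChoice.
From mathcomp Require classical_sets.
Open Scope R_scope.

Lemma dependent_sequence {A : Type} (P : A -> Prop) (Rel : nat -> A -> A -> Prop) (a0 : A) :
  P a0 -> (forall k a, P a -> exists b, P b /\ Rel k a b) ->
  exists s : nat -> A, s 0%nat = a0 /\ forall k, P (s k) /\ Rel k (s k) (s (S k)).
Proof.
  intros h0 hstep.
  destruct (choice (fun (ka : nat * A) b => P (snd ka) -> P b /\ Rel (fst ka) (snd ka) b))
    as [next hnext].
  { intros [k a]. destruct (classic (P a)) as [ha|ha].
    - destruct (hstep k a ha) as [b hb]. exists b; auto.
    - exists a. contradiction. }
  set (s := nat_rect (fun _ => A) a0 (fun k a => next (k, a))).
  assert (hP : forall k, P (s k)).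
  { induction k as [|k IH]; [exact h0|]. apply (hnext (k, s k)); exact IH. }
  exists s. split; [reflexivity|]. intro k. split; [apply hP|]. apply (hnext (k, s k)), hP.
Qed.

Lemma maximal_disjoint_family {I T : Type} (B : I -> T -> Prop) (D : I -> Prop) :
  (forall i, D i -> exists t, B i t) ->
  { E : I -> Prop | (forall i, E i -> D i) /\
      (forall i j, E i -> E j -> (exists t, B i t /\ B j t) -> i = j) /\
      (forall j, D j -> exists i, E i /\ exists t, B i t /\ B j t) }.
Proof.
  intro hne.
  destruct (classical_sets.ex_maximal_disjoint_subcollection B D) as [E [hED hdisj hmax]].
  exists E. split; [exact hED|split; [exact hdisj|]].
  intros j hj. apply NNPP; intro hfree.
  assert (hmeet : forall i, E i -> (exists t, B i t /\ B j t) -> False)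
    by (intros i hi hij; apply hfree; exists i; auto).
  apply (hmax (fun i => E i \/ i = j)).
  - split; [intros i hi; left; exact hi|].
    intro hsub. destruct (hne j hj) as [t ht].
    apply (hmeet j (hsub j (or_intror eq_refl))). exists t; auto.
  - intros i [hi|e]; [auto|subst; exact hj].
  - intros i i' hi hi' [t [h1 h2]].
    destruct hi as [hi|e], hi' as [hi'|e']; try subst i; try subst i'.
    + exact (hdisj i i' hi hi' (ex_intro _ t (conj h1 h2))).
    + exfalso. apply (hmeet i hi). exists t; auto.
    + exfalso. apply (hmeet i' hi'). exists t; auto.
    + reflexivity.
Qed.

Lemma least_nat (P : nat -> Prop) :
  (exists n, P n) -> exists n, P n /\ forall m, (m < n)%nat -> ~ P m.
Proof.
  intro h.
  destruct (dec_inh_nat_subset_has_unique_least_element P (fun n => classic (P n)) h)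
    as [n [[hn hmin] _]].
  exists n. split; [exact hn|]. intros m hm hPm. specialize (hmin m hPm). lia.
Qed.

Lemma pow2_pos (k : nat) : 0 < INR (2 ^ k).
Proof. apply lt_0_INR. assert (2 ^ k <> 0)%nat by (apply Nat.pow_nonzero; lia). lia. Qed.

Lemma pow2_small (eps : R) : 0 < eps -> exists t, / INR (2 ^ t) < eps.
Proof.
  intro he. destruct (archimed_cor1 eps he) as [t [ht ht0]]. exists t.
  apply Rle_lt_trans with (/ INR t); [|exact ht].
  apply Rinv_le_contravar; [apply lt_0_INR; exact ht0|].
  apply le_INR, Nat.lt_le_incl, Nat.pow_gt_lin_r; lia.
Qed.

Lemma grid_above (N : nat) (y : R) : (0 < N)%nat -> 0 <= y < 1 ->
  exists i, (i <= N)%nat /\ y < INR i / INR N <= y + / INR N.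
Proof.
  intros hN [hy0 hy1].
  assert (hNr : 0 < INR N) by (apply lt_0_INR; exact hN).
  destruct (least_nat (fun i => y < INR i / INR N)) as [i [hi hmin]].
  { exists N. rewrite Rdiv_diag; lra. }
  exists i. split.
  - apply Nat.nlt_ge. intro hNi. apply (hmin N hNi). rewrite Rdiv_diag; lra.
  - split; [exact hi|]. destruct i as [|i].
    + simpl in hi. unfold Rdiv in hi. lra.
    + assert (hprev : ~ y < INR i / INR N) by (apply hmin; lia).
      apply Rnot_lt_le in hprev. rewrite S_INR. unfold Rdiv in *.
      rewrite Rmult_plus_distr_r. lra.
Qed.

Lemma grid_below (N : nat) (y : R) : (0 < N)%nat -> 0 < y <= 1 ->
  exists i, (i <= N)%nat /\ y - / INR N <= INR i / INR N < y.
Proof.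
  intros hN [hy0 hy1].
  assert (hNr : 0 < INR N) by (apply lt_0_INR; exact hN).
  destruct (least_nat (fun i => y <= INR (S i) / INR N)) as [i [hi hmin]].
  { exists (N - 1)%nat. replace (S (N - 1)) with N by lia. rewrite Rdiv_diag; lra. }
  exists i. split; [|split].
  - apply Nat.nlt_ge. intro hNi. apply (hmin (N - 1)%nat); [lia|].
    replace (S (N - 1)) with N by lia. rewrite Rdiv_diag; lra.
  - rewrite S_INR in hi. unfold Rdiv in *. rewrite Rmult_plus_distr_r in hi. lra.
  - destruct i as [|i].
    + simpl. unfold Rdiv. lra.
    + apply Rnot_le_lt, hmin. lia.
Qed.

Section OrderedSpace.
Variable K : Type.
Variable le : K -> K -> Prop.
Hypothesis Hlin : linear_order le.
Local Notation lt := (lt_of le).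

Lemma le_refl x : le x x. Proof. apply Hlin. Qed.
Lemma le_antisym x y : le x y -> le y x -> x = y. Proof. apply Hlin. Qed.
Lemma le_trans x y z : le x y -> le y z -> le x z. Proof. apply Hlin. Qed.
Lemma le_total x y : le x y \/ le y x. Proof. apply Hlin. Qed.

Lemma lt_le x y : lt x y -> le x y. Proof. intros [h _]; exact h. Qed.
Lemma lt_irrefl x : ~ lt x x. Proof. intros [_ h]; auto. Qed.
Lemma lt_not_le x y : lt x y -> ~ le y x.
Proof. intros [h1 h2] h3. apply h2, le_antisym; auto. Qed.
Lemma not_le_lt x y : ~ le x y -> lt y x.
Proof.
  intro h. destruct (le_total x y) as [h'|h']; [tauto|].
  split; [exact h'|]. intros ->. apply h, le_refl.
Qed.
Lemma le_or_lt x y : le x y \/ lt y x.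
Proof. destruct (classic (le x y)); [left|right; apply not_le_lt]; auto. Qed.
Lemma lt_le_trans x y z : lt x y -> le y z -> lt x z.
Proof.
  intros [h1 h2] h3. split; [apply (le_trans _ y); auto|].
  intros ->. apply h2, le_antisym; auto.
Qed.
Lemma le_lt_trans x y z : le x y -> lt y z -> lt x z.
Proof.
  intros h1 [h2 h3]. split; [apply (le_trans _ y); auto|].
  intros ->. apply h3, le_antisym; auto.
Qed.
Lemma lt_trans x y z : lt x y -> lt y z -> lt x z.
Proof. intros h1 h2. apply (lt_le_trans _ y); auto. apply lt_le; auto. Qed.

Lemma max_below u u' w : lt u w -> lt u' w -> exists m, le u m /\ le u' m /\ lt m w.
Proof.
  intros h h'. destruct (le_total u u').
  - exists u'. repeat split; auto using le_refl; apply h'.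
  - exists u. repeat split; auto using le_refl; apply h.
Qed.

Lemma min_above v v' w : lt w v -> lt w v' -> exists m, le m v /\ le m v' /\ lt w m.
Proof.
  intros h h'. destruct (le_total v v').
  - exists v. repeat split; auto using le_refl; apply h.
  - exists v'. repeat split; auto using le_refl; apply h'.
Qed.

Lemma oint_incl_bounds x y u v w :
  (forall z, oint le u v z -> oint le x y z) -> oint le u v w -> le x u /\ le v y.
Proof.
  intros hsub [huw hwv]. destruct (hsub w (conj huw hwv)) as [hxw hwy].
  split; apply NNPP; intro h; apply not_le_lt in h.
  - assert (hx : oint le u v x) by (split; [exact h|apply (lt_trans _ w); auto]).
    exact (lt_irrefl x (proj1 (hsub x hx))).
  - assert (hy : oint le u v y) by (split; [apply (lt_trans _ w)|]; auto).
    exact (lt_irrefl y (proj2 (hsub y hy))).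
Qed.

Lemma chain_lt (s : nat -> K) (N : nat) : (forall i, (i < N)%nat -> lt (s i) (s (S i))) ->
  forall i j, (i < j)%nat -> (j <= N)%nat -> lt (s i) (s j).
Proof.
  intros hs i j hij. induction hij as [|j hij IH]; intro hjN; [apply hs; lia|].
  apply (lt_trans _ (s j)); [apply IH|apply hs]; lia.
Qed.

Lemma chain_le (s : nat -> K) (N : nat) : (forall i, (i < N)%nat -> lt (s i) (s (S i))) ->
  forall i j, (i <= j)%nat -> (j <= N)%nat -> le (s i) (s j).
Proof.
  intros hs i j hij hjN. destruct (Nat.eq_dec i j) as [->|hne]; [apply le_refl|].
  apply lt_le, (chain_lt s N); auto; lia.
Qed.

Definition lower_ray (oa : option K) (z : K) : Prop :=
  match oa with Some a => lt a z | None => True end.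
Definition upper_ray (ob : option K) (z : K) : Prop :=
  match ob with Some b => lt z b | None => True end.

Lemma lower_ray_inter oa1 oa2 x : lower_ray oa1 x -> lower_ray oa2 x ->
  exists oa, lower_ray oa x /\ forall z, lower_ray oa z -> lower_ray oa1 z /\ lower_ray oa2 z.
Proof.
  destruct oa1 as [a1|], oa2 as [a2|]; simpl; intros h1 h2.
  - destruct (le_total a1 a2).
    + exists (Some a2). simpl. split; [exact h2|]. intros z hz. split; [apply (le_lt_trans _ a2)|]; auto.
    + exists (Some a1). simpl. split; [exact h1|]. intros z hz. split; [|apply (le_lt_trans _ a1)]; auto.
  - exists (Some a1). simpl. auto.
  - exists (Some a2). simpl. auto.
  - exists None. simpl. auto.
Qed.

Lemma upper_ray_inter ob1 ob2 x : upper_ray ob1 x -> upper_ray ob2 x ->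
  exists ob, upper_ray ob x /\ forall z, upper_ray ob z -> upper_ray ob1 z /\ upper_ray ob2 z.
Proof.
  destruct ob1 as [b1|], ob2 as [b2|]; simpl; intros h1 h2.
  - destruct (le_total b1 b2).
    + exists (Some b1). simpl. split; [exact h1|]. intros z hz. split; [|apply (lt_le_trans _ b1)]; auto.
    + exists (Some b2). simpl. split; [exact h2|]. intros z hz. split; [apply (lt_le_trans _ b2)|]; auto.
  - exists (Some b1). simpl. auto.
  - exists (Some b2). simpl. auto.
  - exists None. simpl. auto.
Qed.

Lemma ray_box_inter oa1 ob1 oa2 ob2 x :
  ray_box le oa1 ob1 x -> ray_box le oa2 ob2 x ->
  exists oa ob, ray_box le oa ob x /\
    forall z, ray_box le oa ob z -> ray_box le oa1 ob1 z /\ ray_box le oa2 ob2 z.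
Proof.
  intros [hl1 hu1] [hl2 hu2].
  destruct (lower_ray_inter oa1 oa2 x hl1 hl2) as [oa [hl hlz]].
  destruct (upper_ray_inter ob1 ob2 x hu1 hu2) as [ob [hu huz]].
  exists oa, ob. split; [split; assumption|].
  intros z [hzl hzu]. destruct (hlz z hzl), (huz z hzu). split; split; assumption.
Qed.

(* Otherwise the complements ]-oo,x_k[ \/ ]y_k,+oo[ would cover K, and a finite
   subcover would miss x_m for m the largest index used. *)
Lemma compact_nested_intervals (Hc : compact_space (order_open le)) (x y : nat -> K) :
  (forall k, le (x k) (x (S k))) -> (forall k, le (y (S k)) (y k)) ->
  (forall k, le (x k) (y k)) -> exists z, forall k, le (x k) z /\ le z (y k).
Proof.
  intros hx hy hxy.
  assert (hxm : forall i j, (i <= j)%nat -> le (x i) (x j))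
    by (intros i j h; induction h; [apply le_refl|apply (le_trans _ (x m)); auto]).
  assert (hym : forall i j, (i <= j)%nat -> le (y j) (y i))
    by (intros i j h; induction h; [apply le_refl|apply (le_trans _ (y m)); auto]).
  apply NNPP; intro hno.
  destruct (Hc nat (fun k z => lt z (x k) \/ lt (y k) z)) as [l hl].
  - intros k z [h|h].
    + exists None, (Some (x k)). split; [split; simpl; auto|]. intros w [_ hw]. left; exact hw.
    + exists (Some (y k)), None. split; [split; simpl; auto|]. intros w [hw _]. right; exact hw.
  - intro z. apply NNPP; intro hz. apply hno. exists z. intro k.
    split; apply NNPP; intro h; apply hz; exists k; [left|right]; apply not_le_lt; exact h.
  - set (m := list_max l).
    assert (hm : forall i, In i l -> (i <= m)%nat).
    { intros i hi. assert (hall := proj1 (list_max_le l m) (Nat.le_refl m)).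
      rewrite Forall_forall in hall. apply hall, hi. }
    destruct (hl (x m)) as [i [hi [h|h]]]; apply (lt_not_le _ _ h).
    + apply hxm, hm, hi.
    + apply (le_trans _ (y m)); [apply hxy|apply hym, hm, hi].
Qed.

Definition dense_on (a b : K) : Prop :=
  forall c e, le a c -> lt c e -> le e b -> exists w, oint le c e w.

Definition mid (c e : K) : K :=
  match excluded_middle_informative (exists w, oint le c e w) with
  | left h => proj1_sig (constructive_indefinite_description _ h)
  | right _ => c
  end.

Lemma mid_spec c e : (exists w, oint le c e w) -> oint le c e (mid c e).
Proof.
  intro h. unfold mid. destruct excluded_middle_informative as [h'|h']; [|contradiction].
  exact (proj2_sig (constructive_indefinite_description _ h')).
Qed.

(* An Urysohn function for a gap-free interval [u,v]: dyadic points pt k i (i <= 2^k) are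
   placed in [u,v] by repeated bisection, and urys x is the supremum of the dyadic numbers
   i/2^k with pt k i <= x. *)
Section Urysohn.
Variables u v : K.
Hypothesis Huv : lt u v.
Hypothesis Hd : dense_on u v.

Fixpoint pt (k i : nat) : K :=
  match k with
  | O => match i with O => u | _ => v end
  | S k' => if Nat.even i then pt k' (Nat.div2 i)
            else mid (pt k' (Nat.div2 i)) (pt k' (S (Nat.div2 i)))
  end.

Lemma pt_S k i : pt (S k) i = if Nat.even i then pt k (Nat.div2 i)
  else mid (pt k (Nat.div2 i)) (pt k (S (Nat.div2 i))).
Proof. reflexivity. Qed.

Lemma pt_double k i : pt (S k) (2 * i) = pt k i.
Proof. rewrite pt_S, Nat.even_even, Nat.div2_double. reflexivity. Qed.

Lemma pt_odd k i : pt (S k) (2 * i + 1) = mid (pt k i) (pt k (S i)).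
Proof.
  rewrite pt_S, Nat.even_odd. replace (2 * i + 1)%nat with (S (2 * i)) by lia.
  rewrite Nat.div2_succ_double. reflexivity.
Qed.

Lemma pt_lift k t i : pt (k + t) (i * 2 ^ t) = pt k i.
Proof.
  induction t as [|t IH]; [rewrite Nat.add_0_r, Nat.mul_1_r; reflexivity|].
  replace (i * 2 ^ S t)%nat with (2 * (i * 2 ^ t))%nat by (rewrite Nat.pow_succ_r'; ring).
  rewrite Nat.add_succ_r, pt_double. exact IH.
Qed.

Lemma pt_first k : pt k 0 = u.
Proof. exact (pt_lift 0 k 0). Qed.

Lemma pt_last k : pt k (2 ^ k) = v.
Proof. rewrite <- (Nat.mul_1_l (2 ^ k)). exact (pt_lift 0 k 1). Qed.

Lemma pt_succ_lt k i : (i < 2 ^ k)%nat -> lt (pt k i) (pt k (S i)).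
Proof.
  revert i; induction k as [|k IH]; intros i hi.
  - simpl in hi. replace i with 0%nat by lia. exact Huv.
  - assert (hmid : forall m, (m < 2 ^ k)%nat ->
      oint le (pt k m) (pt k (S m)) (mid (pt k m) (pt k (S m)))).
    { intros m hm. apply mid_spec, Hd; [| apply IH, hm |].
      - rewrite <- (pt_first k). apply (chain_le _ _ IH); lia.
      - rewrite <- (pt_last k). apply (chain_le _ _ IH); lia. }
    rewrite Nat.pow_succ_r' in hi.
    destruct (Nat.Even_or_Odd i) as [[m ->]|[m ->]].
    + replace (S (2 * m)) with (2 * m + 1)%nat by lia.
      rewrite pt_double, pt_odd. apply hmid. lia.
    + replace (S (2 * m + 1)) with (2 * S m)%nat by lia.
      rewrite pt_odd, pt_double. apply hmid. lia.
Qed.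

Lemma pt_strict k i j : (i < j)%nat -> (j <= 2 ^ k)%nat -> lt (pt k i) (pt k j).
Proof. apply chain_lt, pt_succ_lt. Qed.

Lemma pt_cmp k i m j : (i <= 2 ^ k)%nat -> (j <= 2 ^ m)%nat ->
  le (pt m j) (pt k i) -> (j * 2 ^ k <= i * 2 ^ m)%nat.
Proof.
  intros hi hj hle. apply Nat.nlt_ge. intro hlt.
  rewrite <- (pt_lift k m i), <- (pt_lift m k j), (Nat.add_comm m k) in hle.
  apply (lt_not_le _ _ (pt_strict (k + m) _ _ hlt ltac:(rewrite Nat.pow_add_r; nia)) hle).
Qed.

Definition dyadic_below (x : K) (r : R) : Prop :=
  r = 0 \/ exists k i, (i <= 2 ^ k)%nat /\ le (pt k i) x /\ r = INR i / INR (2 ^ k).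

Lemma dyadic_unit k i : (i <= 2 ^ k)%nat -> 0 <= INR i / INR (2 ^ k) <= 1.
Proof.
  intro hi. assert (hp := pow2_pos k). apply le_INR in hi. split.
  - unfold Rdiv. apply Rmult_le_pos; [apply pos_INR|left; apply Rinv_0_lt_compat, hp].
  - rewrite <- (Rdiv_diag (INR (2 ^ k))) by lra. unfold Rdiv.
    apply Rmult_le_compat_r; [left; apply Rinv_0_lt_compat, hp|exact hi].
Qed.

Lemma dyadic_below_unit x r : dyadic_below x r -> 0 <= r <= 1.
Proof. intros [->|[k [i [hi [_ ->]]]]]; [lra|apply dyadic_unit, hi]. Qed.

Lemma dyadic_below_bound x : bound (dyadic_below x).
Proof. exists 1. intros r hr. apply (dyadic_below_unit x r hr). Qed.

Definition urys (x : K) : R :=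
  proj1_sig (completeness (dyadic_below x) (dyadic_below_bound x) (ex_intro _ 0 (or_introl eq_refl))).

Lemma urys_ub x r : dyadic_below x r -> r <= urys x.
Proof. unfold urys. destruct completeness as [m hm]. simpl. apply hm. Qed.

Lemma urys_lub x b : (forall r, dyadic_below x r -> r <= b) -> urys x <= b.
Proof. unfold urys. destruct completeness as [m hm]. simpl. apply hm. Qed.

Lemma urys_bounds x : 0 <= urys x <= 1.
Proof.
  split; [apply urys_ub; left; reflexivity|].
  apply urys_lub. intros r hr. apply (dyadic_below_unit x r hr).
Qed.

Lemma urys_mono x y : le x y -> urys x <= urys y.
Proof.
  intro h. apply urys_lub. intros r [->|[k [i [hi [hpt ->]]]]]; apply urys_ub; [left; reflexivity|].
  right. exists k, i. repeat split; auto. apply (le_trans _ x); auto.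
Qed.

Lemma urys_pt k i : (i <= 2 ^ k)%nat -> urys (pt k i) = INR i / INR (2 ^ k).
Proof.
  intro hi. apply Rle_antisym.
  - apply urys_lub. intros r [->|[m [j [hj [hle ->]]]]]; [apply dyadic_unit, hi|].
    assert (hk := pow2_pos k). assert (hm := pow2_pos m).
    apply pt_cmp in hle; auto. apply le_INR in hle. rewrite !mult_INR in hle.
    unfold Rdiv. apply Rmult_le_reg_r with (INR (2 ^ k) * INR (2 ^ m)); [nra|].
    replace (INR j * / INR (2 ^ m) * (INR (2 ^ k) * INR (2 ^ m))) with (INR j * INR (2 ^ k))
      by (field; lra).
    replace (INR i * / INR (2 ^ k) * (INR (2 ^ k) * INR (2 ^ m))) with (INR i * INR (2 ^ m))
      by (field; lra).
    exact hle.
  - apply urys_ub. right. exists k, i. repeat split; auto. apply le_refl.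
Qed.

Lemma urys_low x : le x u -> urys x = 0.
Proof.
  intro h. apply Rle_antisym; [|apply urys_bounds].
  rewrite <- (pt_first 0) in h. apply urys_mono in h. rewrite urys_pt in h by (simpl; lia).
  simpl in h. lra.
Qed.

Lemma urys_high x : le v x -> urys x = 1.
Proof.
  intro h. apply Rle_antisym; [apply urys_bounds|].
  rewrite <- (pt_last 0) in h. apply urys_mono in h. rewrite urys_pt in h by (simpl; lia).
  simpl in h. lra.
Qed.

Lemma urys_lower x eps : 0 < eps -> exists oa, lower_ray oa x /\
  forall z, lower_ray oa z -> urys x - eps < urys z.
Proof.
  intro he. destruct (Rlt_or_le (urys x - eps) 0) as [hneg|hpos].
  - exists None. split; [exact I|]. intros z _. assert (h := urys_bounds z). lra.
  - destruct (pow2_small eps he) as [t ht].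
    destruct (grid_below (2 ^ t) (urys x)) as [i [hi [hlo hhi]]].
    { apply INR_lt. simpl. apply pow2_pos. }
    { split; [lra|apply urys_bounds]. }
    exists (Some (pt t i)). simpl. split.
    + apply not_le_lt. intro h. apply urys_mono in h. rewrite urys_pt in h by exact hi. lra.
    + intros z hz. apply lt_le, urys_mono in hz. rewrite urys_pt in hz by exact hi. lra.
Qed.

Lemma urys_upper x eps : 0 < eps -> exists ob, upper_ray ob x /\
  forall z, upper_ray ob z -> urys z < urys x + eps.
Proof.
  intro he. destruct (Rlt_or_le (urys x) 1) as [hlt|hge].
  - destruct (pow2_small eps he) as [t ht].
    destruct (grid_above (2 ^ t) (urys x)) as [i [hi [hlo hhi]]].
    { apply INR_lt. simpl. apply pow2_pos. }
    { split; [apply urys_bounds|exact hlt]. }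
    exists (Some (pt t i)). simpl. split.
    + apply not_le_lt. intro h. apply urys_mono in h. rewrite urys_pt in h by exact hi. lra.
    + intros z hz. apply lt_le, urys_mono in hz. rewrite urys_pt in hz by exact hi. lra.
  - exists None. split; [exact I|]. intros z _. assert (h := urys_bounds z). lra.
Qed.

End Urysohn.

Section EmbeddingCriterion.
Variable G : Type.
Variable f : G -> K -> R.
Hypothesis f_range : forall g x, 0 <= f g x <= 1.
Hypothesis f_mono : forall g x y, le x y -> f g x <= f g y.
Hypothesis f_cont : forall g x eps, 0 < eps -> exists oa ob, ray_box le oa ob x /\
  forall z, ray_box le oa ob z -> Rabs (f g z - f g x) < eps.
Hypothesis f_sep : forall a b, lt a b -> exists g, f g a < f g b.
Hypothesis f_countable : forall x, countable_set (fun g => f g x <> 0 /\ f g x <> 1).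

Lemma coordinates_cont x eps l : 0 < eps -> exists oa ob, ray_box le oa ob x /\
  forall z, ray_box le oa ob z -> forall g, In g l -> Rabs (f g z - f g x) < eps.
Proof.
  intro he. induction l as [|g l IH].
  - exists None, None. split; [split; exact I|]. intros z _ g [].
  - destruct IH as [oa2 [ob2 [hx2 h2]]]. destruct (f_cont g x eps he) as [oa1 [ob1 [hx1 h1]]].
    destruct (ray_box_inter _ _ _ _ _ hx1 hx2) as [oa [ob [hx h]]].
    exists oa, ob. split; [exact hx|]. intros z hz g' [<-|hg'].
    + apply h1, h, hz.
    + apply h2; [apply h, hz|exact hg'].
Qed.

Lemma lower_ray_coordinate x oa : lower_ray oa x -> exists l eps, 0 < eps /\
  forall y, (forall g, In g l -> Rabs (f g y - f g x) < eps) -> lower_ray oa y.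
Proof.
  destruct oa as [a|]; simpl; intro h.
  - destruct (f_sep a x h) as [g hg]. exists (g :: nil), (f g x - f g a). split; [lra|].
    intros y hy. specialize (hy g (or_introl eq_refl)). apply Rabs_def2 in hy.
    apply not_le_lt. intro hya. apply (f_mono g) in hya. lra.
  - exists nil, 1. split; [lra|]. intros; exact I.
Qed.

Lemma upper_ray_coordinate x ob : upper_ray ob x -> exists l eps, 0 < eps /\
  forall y, (forall g, In g l -> Rabs (f g y - f g x) < eps) -> upper_ray ob y.
Proof.
  destruct ob as [b|]; simpl; intro h.
  - destruct (f_sep x b h) as [g hg]. exists (g :: nil), (f g b - f g x). split; [lra|].
    intros y hy. specialize (hy g (or_introl eq_refl)). apply Rabs_def2 in hy.
    apply not_le_lt. intro hby. apply (f_mono g) in hby. lra.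
  - exists nil, 1. split; [lra|]. intros; exact I.
Qed.

Lemma coordinate_nbhd U x : order_open le U -> U x -> exists l eps, 0 < eps /\
  forall y, (forall g, In g l -> Rabs (f g y - f g x) < eps) -> U y.
Proof.
  intros hU hx. destruct (hU x hx) as [oa [ob [[hl hu] hbox]]].
  destruct (lower_ray_coordinate x oa hl) as [l1 [e1 [he1 h1]]].
  destruct (upper_ray_coordinate x ob hu) as [l2 [e2 [he2 h2]]].
  exists (l1 ++ l2), (Rmin e1 e2). split; [apply Rmin_glb_lt; assumption|].
  intros y hy. apply hbox. split.
  - apply h1. intros g hg. apply Rlt_le_trans with (Rmin e1 e2); [|apply Rmin_l].
    apply hy, in_or_app; left; exact hg.
  - apply h2. intros g hg. apply Rlt_le_trans with (Rmin e1 e2); [|apply Rmin_r].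
    apply hy, in_or_app; right; exact hg.
Qed.

Theorem embedding_criterion : almost_totally_disconnected (order_open le).
Proof.
  exists G, (fun x g => f g x). split; [intro x; split; auto|split; [|split]].
  - intros x y e. apply NNPP; intro hne.
    assert (hxy : lt x y \/ lt y x)
      by (destruct (le_total x y); [left|right]; split; auto).
    destruct hxy as [h|h]; destruct (f_sep _ _ h) as [g hg];
      assert (e' := f_equal (fun q => q g) e); simpl in e'; lra.
  - intros V hV x hx. destruct (hV _ hx) as [l [eps [he hl]]].
    destruct (coordinates_cont x eps l he) as [oa [ob [h1 h2]]].
    exists oa, ob. split; [exact h1|]. intros z hz. apply hl. intros g hg. apply h2; auto.
  - (* the image of U is the trace of a union of coordinate boxes, each with a margin dl *)
    intros U hU.
    exists (fun q => exists x l eps dl, U x /\ 0 < dl /\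
      (forall y, (forall g, In g l -> Rabs (f g y - f g x) < eps) -> U y) /\
      forall g, In g l -> Rabs (q g - f g x) < eps - dl).
    split.
    + intros q [x [l [eps [dl [hx [hdl [hnb hq]]]]]]].
      exists l, (dl / 2). split; [lra|]. intros q' hq'.
      exists x, l, eps, (dl / 2). repeat split; auto; [lra|].
      intros g hg. specialize (hq' g hg). specialize (hq g hg).
      apply Rabs_def2 in hq'. apply Rabs_def2 in hq. apply Rabs_def1; lra.
    + intro x. split.
      * intro hx. destruct (coordinate_nbhd U x hU hx) as [l [eps [he hnb]]].
        exists x, l, eps, (eps / 2). repeat split; auto; [lra|].
        intros g _. rewrite Rminus_diag, Rabs_R0. lra.
      * intros [x0 [l [eps [dl [_ [hdl [hnb hq]]]]]]]. apply hnb.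
        intros g hg. specialize (hq g hg). lra.
Qed.

End EmbeddingCriterion.

Section Coordinates.
Variable d : K -> K -> R.
Hypothesis Hcpt : compact_space (order_open le).
Hypothesis Hdsep : forall x y, x <> y -> 0 < d x y.
Hypothesis Hsmall : forall x y, lt_of le x y -> (exists z, oint le x y z) ->
  forall eps, 0 < eps ->
  exists u v, lt_of le u v /\ (exists z, oint le u v z) /\
    (forall z, oint le u v z -> oint le x y z) /\
    exists M, M < eps /\
      (forall s t, oint le u v s -> oint le u v t -> d s t <= M).

Definition small_interval (n : nat) (p : K * K) : Prop :=
  (exists z, oint le (fst p) (snd p) z) /\
  exists M, M < / INR (S n) /\
    forall s t, oint le (fst p) (snd p) s -> oint le (fst p) (snd p) t -> d s t <= M.

Definition family (n : nat) : K * K -> Prop :=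
  proj1_sig (maximal_disjoint_family (fun p => oint le (fst p) (snd p)) (small_interval n)
    (fun p hp => proj1 hp)).

Lemma family_small n p : family n p -> small_interval n p.
Proof. unfold family. destruct maximal_disjoint_family as [E hE]. apply hE. Qed.

Lemma family_disjoint n p q : family n p -> family n q ->
  (exists z, oint le (fst p) (snd p) z /\ oint le (fst q) (snd q) z) -> p = q.
Proof. unfold family. destruct maximal_disjoint_family as [E hE]. apply hE. Qed.

Lemma family_maximal n q : small_interval n q ->
  exists p, family n p /\ exists z, oint le (fst p) (snd p) z /\ oint le (fst q) (snd q) z.
Proof. unfold family. destruct maximal_disjoint_family as [E hE]. apply hE. Qed.

Lemma family_lt n p : family n p -> lt (fst p) (snd p).
Proof.
  intro hp. destruct (family_small n p hp) as [[z [h1 h2]] _]. apply (lt_trans _ z); auto.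
Qed.

(* In a gap-free [a,b], every nondegenerate [x,y] contains a strictly smaller [x',y'] that
   lies inside an interval of the n-th family: shrink ]x,y[ to a small interval by Hsmall,
   meet it with a family interval by maximality, and use density around a common point. *)
Lemma family_refines a b n x y : dense_on a b -> le a x -> lt x y -> le y b ->
  exists x' y', lt x x' /\ lt x' y' /\ lt y' y /\
    exists p, family n p /\ forall w, le x' w -> le w y' -> oint le (fst p) (snd p) w.
Proof.
  intros hd hax hxy hyb.
  assert (heps : 0 < / INR (S n)) by (apply Rinv_0_lt_compat, lt_0_INR; lia).
  destruct (Hsmall x y hxy (hd x y hax hxy hyb) _ heps)
    as [u1 [v1 [_ [hne [hsub [M [hM hMd]]]]]]].
  destruct (family_maximal n (u1, v1)) as [[u v] [hF [w [[huw hwv] [hu1w hwv1]]]]];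
    [split; [exact hne|exists M; auto]|].
  simpl in *.
  destruct (oint_incl_bounds x y u1 v1 w hsub (conj hu1w hwv1)) as [hxu1 hv1y].
  destruct (max_below u u1 w huw hu1w) as [m [hum [hu1m hmw]]].
  destruct (min_above v v1 w hwv hwv1) as [m' [hm'v [hm'v1 hwm']]].
  assert (ham : le a m) by (apply (le_trans _ x); auto; apply (le_trans _ u1); auto).
  assert (hm'b : le m' b) by (apply (le_trans _ y); auto; apply (le_trans _ v1); auto).
  assert (haw : le a w) by (apply (le_trans _ m); auto; apply lt_le; auto).
  assert (hwb : le w b) by (apply (le_trans _ m'); auto; apply lt_le; auto).
  destruct (hd m w ham hmw hwb) as [x' [hmx' hx'w]].
  destruct (hd w m' haw hwm' hm'b) as [y' [hwy' hy'm']].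
  exists x', y'. split; [|split; [|split]].
  - apply (le_lt_trans _ m); auto. apply (le_trans _ u1); auto.
  - apply (lt_trans _ w); auto.
  - apply (lt_le_trans _ m'); auto. apply (le_trans _ v1); auto.
  - exists (u, v). split; [exact hF|]. intros w' h1 h2. split; simpl.
    + apply (le_lt_trans _ m); auto. apply (lt_le_trans _ x'); auto.
    + apply (le_lt_trans _ y'); auto. apply (lt_le_trans _ m'); auto.
Qed.

(* Otherwise refining
   produces nested intervals, with a common point z in ]a,b[ by compactness, such that for
   each k the level-k family interval around z sticks out of [a,b], hence contains a or b;
   so d(z,a) or d(z,b) is < 1/(k+1) for every k, contradicting d(z,a), d(z,b) > 0. *)
Lemma interval_in_family a b : lt a b -> dense_on a b ->
  exists n p, family n p /\ le a (fst p) /\ le (snd p) b.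
Proof.
  intros hab hd. apply NNPP; intro hno.
  set (P := fun q : K * K => le a (fst q) /\ lt (fst q) (snd q) /\ le (snd q) b).
  set (Step := fun k (q q' : K * K) => lt (fst q) (fst q') /\ lt (snd q') (snd q) /\
    exists p, family k p /\ forall w, le (fst q') w -> le w (snd q') -> oint le (fst p) (snd p) w).
  destruct (dependent_sequence P Step (a, b)) as [s [hs0 hs]].
  - split; [apply le_refl|split; [exact hab|apply le_refl]].
  - intros k [x y] [hax [hxy hyb]]. simpl in *.
    destruct (family_refines a b k x y hd hax hxy hyb) as [x' [y' [hxx' [hx'y' [hy'y hp]]]]].
    exists (x', y'). split; [split; [|split]|split; [|split]]; simpl; auto.
    + apply (le_trans _ x); auto. apply lt_le; auto.
    + apply (le_trans _ y); auto. apply lt_le; auto.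
  - destruct (compact_nested_intervals Hcpt (fun k => fst (s k)) (fun k => snd (s k)))
      as [z hz].
    + intro k. apply lt_le, (hs k).
    + intro k. apply lt_le, (hs k).
    + intro k. apply lt_le, (hs k).
    + assert (hza : lt a z).
      { destruct (hs 0%nat) as [_ [hlt _]]. rewrite hs0 in hlt.
        apply (lt_le_trans _ (fst (s 1%nat))); [exact hlt|apply (hz 1%nat)]. }
      assert (hzb : lt z b).
      { destruct (hs 0%nat) as [_ [_ [hlt _]]]. rewrite hs0 in hlt.
        apply (le_lt_trans _ (snd (s 1%nat))); [apply (hz 1%nat)|exact hlt]. }
      assert (hclose : forall k, d z a < / INR (S k) \/ d z b < / INR (S k)).
      { intro k. destruct (hs k) as [_ [_ [_ [[u v] [hF hin]]]]].
        destruct (hz (S k)) as [hz1 hz2]. destruct (hin z hz1 hz2) as [huz hzv]. simpl in *.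
        destruct (family_small k (u, v) hF) as [_ [M [hM hMd]]]. simpl in hMd.
        destruct (le_or_lt a u) as [hau|hua].
        - right. assert (hvb : lt b v).
          { apply not_le_lt. intro hvb. apply hno. exists k, (u, v). auto. }
          apply Rle_lt_trans with M; [apply hMd; split; auto; apply (lt_trans _ z); auto|exact hM].
        - left. apply Rle_lt_trans with M; [apply hMd; split; auto; apply (lt_trans _ z); auto|exact hM]. }
      assert (hmin : 0 < Rmin (d z a) (d z b)).
      { apply Rmin_glb_lt; apply Hdsep; intro e; rewrite e in *;
          [exact (lt_irrefl _ hza)|exact (lt_irrefl _ hzb)]. }
      destruct (archimed_cor1 _ hmin) as [[|k] [hk hk0]]; [lia|].
      assert (ha := Rmin_l (d z a) (d z b)). assert (hb := Rmin_r (d z a) (d z b)).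
      destruct (hclose k); lra.
Qed.

Definition gap (c e : K) : Prop := lt c e /\ ~ (exists w, oint le c e w).

(* The indicator of the clopen set ]c,+oo[ = [e,+oo[ for a gap c < e (0 otherwise). *)
Definition jump_coord (c e z : K) : R :=
  if excluded_middle_informative (gap c e /\ lt c z) then 1 else 0.

Definition urys_coord (n : nat) (p : K * K) (z : K) : R :=
  if excluded_middle_informative (family n p /\ dense_on (fst p) (snd p))
  then urys (fst p) (snd p) z else 0.

Definition coord (g : (K * K) + (nat * (K * K))) : K -> R :=
  match g with
  | inl (c, e) => jump_coord c e
  | inr (n, p) => urys_coord n p
  end.

Lemma coord_range g x : 0 <= coord g x <= 1.
Proof.
  destruct g as [[c e]|[n p]]; simpl; [unfold jump_coord|unfold urys_coord];
    destruct excluded_middle_informative; try lra. apply urys_bounds.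
Qed.

Lemma coord_mono g x y : le x y -> coord g x <= coord g y.
Proof.
  intro h. destruct g as [[c e]|[n p]]; simpl.
  - unfold jump_coord.
    destruct (excluded_middle_informative (gap c e /\ lt c x)) as [[hg hcx]|_];
      destruct excluded_middle_informative as [_|hn]; try lra.
    exfalso. apply hn. split; [exact hg|apply (lt_le_trans _ x); assumption].
  - unfold urys_coord. destruct excluded_middle_informative; [apply urys_mono, h|lra].
Qed.

Lemma jump_locally_constant c e x : exists oa ob, ray_box le oa ob x /\
  forall z, ray_box le oa ob z -> jump_coord c e z = jump_coord c e x.
Proof.
  unfold jump_coord. destruct (classic (gap c e)) as [hg|hng].
  - destruct (le_or_lt x c) as [hxc|hcx].
    + (* left of the gap: the value is 0 on ]-oo,e[ *)
      exists None, (Some e).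
      split; [split; [exact I|apply (le_lt_trans _ c); [exact hxc|apply hg]]|].
      intros z [_ hze]. simpl in hze.
      destruct (excluded_middle_informative (gap c e /\ lt c z)) as [[_ hcz]|_].
      * exfalso. apply (proj2 hg). exists z. split; assumption.
      * destruct excluded_middle_informative as [[_ hcx]|_]; [|reflexivity].
        exfalso. exact (lt_not_le _ _ hcx hxc).
    + (* right of the gap: the value is 1 on ]c,+oo[ *)
      exists (Some c), None. split; [split; [exact hcx|exact I]|].
      intros z [hcz _]. simpl in hcz.
      do 2 destruct excluded_middle_informative as [?|?]; try reflexivity; exfalso; tauto.
  - exists None, None. split; [split; exact I|]. intros z _.
    do 2 destruct excluded_middle_informative as [?|?]; try reflexivity; exfalso; tauto.
Qed.

Lemma coord_cont g x eps : 0 < eps -> exists oa ob, ray_box le oa ob x /\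
  forall z, ray_box le oa ob z -> Rabs (coord g z - coord g x) < eps.
Proof.
  intro he. destruct g as [[c e]|[n p]]; simpl.
  - destruct (jump_locally_constant c e x) as [oa [ob [hx hconst]]].
    exists oa, ob. split; [exact hx|]. intros z hz.
    rewrite hconst, Rminus_diag, Rabs_R0 by exact hz. exact he.
  - unfold urys_coord. destruct excluded_middle_informative as [[hF hd]|hno].
    + assert (huv := family_lt n p hF).
      destruct (urys_lower _ _ huv hd x eps he) as [oa [hxa ha]].
      destruct (urys_upper _ _ huv hd x eps he) as [ob [hxb hb]].
      exists oa, ob. split; [split; assumption|]. intros z [hza hzb].
      specialize (ha z hza). specialize (hb z hzb). apply Rabs_def1; lra.
    + exists None, None. split; [split; exact I|]. intros z _.
      rewrite Rminus_diag, Rabs_R0. exact he.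
Qed.

(* Points a < b are separated: by a jump coordinate if [a,b] contains a gap, and otherwise by
   the Urysohn coordinate of a family interval inside [a,b] (interval_in_family). *)
Lemma coord_sep a b : lt a b -> exists g, coord g a < coord g b.
Proof.
  intro hab. destruct (classic (dense_on a b)) as [hd|hnd].
  - destruct (interval_in_family a b hab hd) as [n [[u v] [hF [hau hvb]]]]. simpl in *.
    assert (huv := family_lt n (u, v) hF). simpl in huv.
    assert (hduv : dense_on u v).
    { intros c e hc hce he. apply hd; auto.
      - apply (le_trans _ u); auto.
      - apply (le_trans _ v); auto. }
    exists (inr (n, (u, v))). simpl. unfold urys_coord.
    destruct excluded_middle_informative as [[_ hd']|hno]; [|tauto]. simpl in *.
    rewrite (urys_low u v huv hd' a hau), (urys_high u v huv hd' b hvb). lra.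
  - apply NNPP. intro hno. apply hnd. intros c e hac hce heb. apply NNPP. intro hgap.
    apply hno. exists (inl (c, e)). simpl. unfold jump_coord.
    destruct (excluded_middle_informative (gap c e /\ lt c a)) as [[_ hca]|_].
    + exfalso. apply (lt_not_le _ _ hca hac).
    + destruct excluded_middle_informative as [_|hn]; [lra|].
      exfalso. apply hn. split; [split; assumption|]. apply (lt_le_trans _ e); auto.
Qed.

Lemma coord_nonbinary g x : coord g x <> 0 -> coord g x <> 1 ->
  exists n p, g = inr (n, p) /\ family n p /\ oint le (fst p) (snd p) x.
Proof.
  intros h0 h1. destruct g as [[c e]|[n p]]; simpl in h0, h1.
  - exfalso. unfold jump_coord in *. destruct excluded_middle_informative; tauto.
  - unfold urys_coord in *. destruct excluded_middle_informative as [[hF hd]|]; [|tauto].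
    assert (huv := family_lt n p hF).
    exists n, p. split; [reflexivity|split; [exact hF|split]]; apply not_le_lt; intro h.
    + apply h0, (urys_low _ _ huv hd x h).
    + apply h1, (urys_high _ _ huv hd x h).
Qed.

(* At each point, at most one coordinate per level n is not in {0,1}, by disjointness. *)
Lemma coord_countable x : countable_set (fun g => coord g x <> 0 /\ coord g x <> 1).
Proof.
  exists (fun g => match g with inl _ => 0%nat | inr (n, _) => n end).
  intros g g' [h0 h1] [h0' h1'] e.
  destruct (coord_nonbinary g x h0 h1) as [n [p [-> [hF hx]]]].
  destruct (coord_nonbinary g' x h0' h1') as [n' [p' [-> [hF' hx']]]].
  simpl in e. subst n'. f_equal. f_equal. apply (family_disjoint n p p'); eauto.
Qed.

End Coordinates.

End OrderedSpace.

Theorem mainTheorem8 (K : Type) (le : K -> K -> Prop) (d : K -> K -> R)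
  (Hlin : linear_order le)
  (Hcpt : compact_space (order_open le))
  (Hdpos : forall x y, 0 <= d x y)
  (Hdsym : forall x y, d x y = d y x)
  (Hdsep : forall x y, x <> y -> 0 < d x y)
  (Hsmall : forall x y, lt_of le x y -> (exists z, oint le x y z) ->
     forall eps, 0 < eps ->
     exists u v, lt_of le u v /\ (exists z, oint le u v z) /\
       (forall z, oint le u v z -> oint le x y z) /\
       exists M, M < eps /\
         (forall s t, oint le u v s -> oint le u v t -> d s t <= M)) :
  almost_totally_disconnected (order_open le).
Proof.
  apply (embedding_criterion K le Hlin _ (coord K le d)).
  - apply coord_range.
  - apply coord_mono; exact Hlin.
  - apply coord_cont; exact Hlin.
  - apply coord_sep; assumption.
  - apply coord_countable; exact Hlin.
Qed.
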